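(* When the number of features is $|F|=2$, the generalized student-proposing deferred acceptance algorithm with the LOICV proposing method is incentive compatible with rationality (IC-R).
   Context: Model: students $N$; colleges $M$, each college $c$ with positive integer capacity $x_c$ and strict preference $\succ_c$ over $N$; features $F$; utilities $u_s^f:M\to[0,1]$; for each student $s$ an independent distribution $\mu_s$ over weight vectors $w_s$ ($w_s^f\ge0$, $\sum_f w_s^f=1$). For realized $w_s$, $c\succeq_s^{w_s}c'$ iff $\sum_f w_s^fu_s^f(c)\ge\sum_f w_s^fu_s^f(c')$, strict version $\succ_s^{w_s}$; $\mathsf{null}$ ranked below any college. Generalized student-proposing DA: all students start unmatched with $R_s=\emptyset$; while some unmatched student $s$ has $R_s\ne M$, each such student proposes to $\mathsf{Next}(s,R_s)\notin R_s$ (computed from her reported data); each college keeps its $x_c$ most preferred students among those it holds and its new proposers and rejects the rest (rejected students add the college to $R_s$ and become unmatched). Output the final matching. LOICV: for each $c\notin R_s$, form the vector $(\Pr[c\succeq_s^{w_s}c'])_{c'\in M\setminus R_s,\,c'\ne c}$ sorted in ascending order; $\mathsf{Next}$ returns a college of $M\setminus R_s$ whose vector is lexicographically largest (ties broken randomly or by a predetermined rule). IC-R: each student $s$ may report any $(u_s',\mu_s')$ instead of her true data; with $\pi(s)$, $\pi'(s)$ her assignments under truthful report and misreport (others fixed), the algorithm is IC-R if $\Pr[\pi'(s)\succ_s^{w_s}\pi(s)]>1/2$ never occurs, the probability being over her true $w_s\sim\mu_s$ with true utilities. *)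

From HB Require Import structures.
From mathcomp Require Import all_boot all_order all_algebra.
From mathcomp Require Import all_classical all_reals all_analysis.
Set Implicit Arguments. Unset Strict Implicit. Unset Printing Implicit Defensive.
Import Order.TTheory GRing.Theory Num.Theory.
Local Open Scope ring_scope.


(* Two features: a weight vector is a pair w = (w^1, w^2) in R * R.
   A report (or true private data) of a student consists of the two
   feature utilities u^1, u^2 : M -> R and a distribution mu over weight
   vectors (a probability measure on R * R). *)
Record report (R : realType) (M : finType) := Report {
  util1 : M -> R;
  util2 : M -> R;
  wdist : probability (R * R)%type R }.

Definition valid_report (R : realType) (M : finType) (r : report R M) : Prop :=
  (forall c, 0 <= util1 r c <= 1 /\ 0 <= util2 r c <= 1) /\
  wdist r [set w | 0 <= w.1 /\ 0 <= w.2 /\ w.1 + w.2 = 1]%classic = 1%E.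

Definition wutil (R : realType) (M : finType) (u1 u2 : M -> R) (w : R * R) (c : M) : R :=
  w.1 * u1 c + w.2 * u2 c.

Definition prob_weak (R : realType) (M : finType) (r : report R M) (c c' : M) : R :=
  fine (wdist r [set w | wutil (util1 r) (util2 r) w c' <= wutil (util1 r) (util2 r) w c]%classic).

Definition loicv_vec (R : realType) (M : finType) (r : report R M) (Rs : {set M}) (c : M)
  : seq R :=
  sort <=%R [seq prob_weak r c c' | c' <- enum (~: Rs) & c' != c].

Fixpoint lex_le (R : realType) (s t : seq R) : bool :=
  match s, t with
  | [::], _ => true
  | _ :: _, [::] => false
  | x :: s', y :: t' => (x < y) || ((x == y) && lex_le s' t')
  end.

Definition loicv_best (R : realType) (M : finType) (r : report R M) (Rs : {set M})
  : {set M} :=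
  [set c in ~: Rs | [forall c' in ~: Rs, lex_le (loicv_vec r Rs c') (loicv_vec r Rs c)]].

Definition tie_rule (N M : finType) (tb : N -> {set M} -> option M) : Prop :=
  forall (s : N) (A : {set M}), A != finset.set0 -> exists2 c, tb s A = Some c & c \in A.

Definition loicv_next (R : realType) (N M : finType) (tb : N -> {set M} -> option M)
  (rep : N -> report R M) (s : N) (Rs : {set M}) : option M :=
  tb s (loicv_best (rep s) Rs).

Definition strict_total (N : finType) (p : rel N) : Prop :=
  [/\ irreflexive p, transitive p & forall a b, a != b -> p a b || p b a].

(* State of the DA: rejection sets R_s and current holding college (None = unmatched). *)
Definition da_state (N M : finType) := ((N -> {set M}) * (N -> option M))%type.

Definition da_init (N M : finType) : da_state N M := (fun _ => finset.set0, fun _ => None).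

Definition da_step (N M : finType) (nxt : N -> {set M} -> option M)
  (pref : M -> rel N) (cap : M -> nat) (st : da_state N M) : da_state N M :=
  let Rs := st.1 in let m := st.2 in
  let proposer s := (m s == None) && (Rs s != [set: M]) in
  let target s := if proposer s then nxt s (Rs s) else m s in
  let kept s := if target s is Some c then
                  (#|[pred t | (target t == Some c) && pref c t s]| < cap c)%N
                else false in
  (fun s => if target s is Some c then (if kept s then Rs s else c |: Rs s) else Rs s,
   fun s => if kept s then target s else None).

Definition da_terminal (N M : finType) (st : da_state N M) : bool :=
  [forall s, (st.2 s != None) || (st.1 s == [set: M])].

Definition da_outcome (N M : finType) (nxt : N -> {set M} -> option M)
  (pref : M -> rel N) (cap : M -> nat) (pi : N -> option M) : Prop :=
  exists k, da_terminal (iter k (da_step nxt pref cap) (da_init N M)) /\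
    (forall j, (j < k)%N -> ~~ da_terminal (iter j (da_step nxt pref cap) (da_init N M))) /\
    pi = (iter k (da_step nxt pref cap) (da_init N M)).2.

Definition spref (R : realType) (M : finType) (u1 u2 : M -> R) (w : R * R)
  (a b : option M) : Prop :=
  match a, b with
  | Some c, Some c' => wutil u1 u2 w c' < wutil u1 u2 w c
  | Some _, None => True
  | None, _ => False
  end.

Definition upd_report (R : realType) (N M : finType) (rep : N -> report R M)
  (s : N) (r : report R M) : N -> report R M :=
  fun t => if t == s then r else rep t.

(* A misreport changes only the student's own choice function, and in deferred
   acceptance she can then never end up at a college that rejected her in the truthful run
   (a Dubins-Freedman type argument on the students who would).  Hence she obtains a
   college c' that was still available when the truthful run assigned her the LOICV-best
   college c.  With two features the weight is w = (x, 1 - x) and every utility difference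
   is affine in x, so the college that is best at a median of x is a weak Condorcet winner.
   The sorted vector of c lexicographically dominates that of the winner, whose entries are
   all at least 1/2, hence Pr[c >= c'] >= 1/2. *)

From HB Require Import structures.
From mathcomp Require Import all_boot all_order.
Set Implicit Arguments. Unset Strict Implicit. Unset Printing Implicit Defensive.

Lemma exists_total_max (T : finType) (le : rel T) (A : {set T}) :
  total le -> transitive le -> A != set0 -> exists2 b, b \in A & forall t, t \in A -> le t b.
Proof.
move=> le_tot le_tr /set0Pn[a aA].
pose ge x y := le y x.
have ge_tr : transitive ge by move=> y x z xy yz; exact: le_tr yz xy.
have mem_s t : (t \in sort ge (enum A)) = (t \in A) by rewrite mem_sort mem_enum.
have ge_tot : total ge by move=> x y; exact: le_tot y x.
have := sort_sorted ge_tot (enum A).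
case: (sort ge (enum A)) mem_s => [|b s] mem_s; first by have := mem_s a; rewrite aA.
move=> /(order_path_min ge_tr)/allP ge_b; exists b; first by rewrite -mem_s mem_head.
move=> t; rewrite -mem_s inE => /predU1P[->|]; last exact: ge_b.
by have := le_tot b b; rewrite orbb.
Qed.

Lemma exists_first_step (P : nat -> bool) n : ~~ P 0 -> P n ->
  exists j, [/\ j < n, ~~ P j & P j.+1].
Proof.
move=> P0; elim: n => [|n IH] Pn; first by rewrite Pn in P0.
have [/IH[j [jn Pj Pj1]]|nPn] := boolP (P n); first by exists j; split => //; exact: ltnW.
by exists n.
Qed.

Lemma card_preim_fibers (T U : finType) (A : {set T}) (B : {set U}) (h : T -> U) :
  #|[set x in A | h x \in B]| = \sum_(b in B) #|[set x in A | h x == b]|.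
Proof.
rewrite -sum1_card (partition_big h (mem B)) /=; last by move=> x; rewrite inE => /andP[].
apply: eq_bigr => b bB; rewrite sum1dep_card; apply: eq_card => x; rewrite !inE.
by case: eqP => [->|_]; rewrite ?bB ?andbT ?andbF.
Qed.

(* the fibers of [g] over [f @: A] already exhaust [A] *)
Lemma fibers_le_image (T U : finType) (A : {set T}) (f g : T -> U) :
  (forall a, a \in A -> #|[set x in A | f x == f a]| <= #|[set x in A | g x == f a]|) ->
  forall a, a \in A -> g a \in f @: A.
Proof.
move=> fiber_le; set B := f @: A.
have fA : [set x in A | f x \in B] = A.
  by apply/setP => x; rewrite inE andb_idr //; exact: imset_f.
have gA : [set x in A | g x \in B] == A.
  rewrite eqEcard; apply/andP; split; first by apply/subsetP => x; rewrite inE => /andP[].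
  rewrite -{1}fA !card_preim_fibers; apply: leq_sum => _ /imsetP[a aA ->].
  exact: fiber_le.
by move=> a aA; move/eqP/setP/(_ a): gA; rewrite inE aA /= => ->.
Qed.

Section StrictTotal.
Variable T : finType.
Implicit Types (p : rel T) (A B : {set T}) (k : nat).

Lemma strict_total_asym p a b : strict_total p -> p a b -> ~~ p b a.
Proof. by case=> irr tr _ ab; apply/negP => /(tr _ _ _ ab); rewrite irr. Qed.

Lemma strict_total_flip p : strict_total p -> strict_total (fun x y => p y x).
Proof.
case=> irr tr tot; split => // [y x z xy yz | a b ab]; first exact: tr yz xy.
by rewrite orbC; apply: tot.
Qed.

Lemma strict_total_top p A : strict_total p -> A != set0 ->
  exists2 b, b \in A & forall t, t \in A -> t != b -> p b t.
Proof.
case=> irr tr tot; pose le x y := (x == y) || p y x.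
have le_tot : total le.
  move=> x y; rewrite /le; have [-> //|xy] := eqVneq x y.
  by rewrite /= orbC; apply: tot.
have le_tr : transitive le.
  move=> y x z /predU1P[-> //|yx] /predU1P[<-|zy]; rewrite /le ?yx ?orbT //.
  by rewrite (tr _ _ _ zy yx) orbT.
move=> /(exists_total_max le_tot le_tr)[b bA b_max]; exists b => // t tA tb.
by have /predU1P[tb'|] := b_max t tA; first by rewrite tb' eqxx in tb.
Qed.

Variable p : rel T.
Hypothesis p_st : strict_total p.

Definition topk A k := [set t in A | #|[set t' in A | p t' t]| < k].

Lemma card_topk_le A k : #|topk A k| <= k.
Proof.
rewrite leqNgt; apply/negP => k_lt.
have K_neq0 : topk A k != set0 by rewrite -card_gt0; exact: leq_ltn_trans k_lt.
have [b bK b_min] := strict_total_top (strict_total_flip p_st) K_neq0.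
have := bK; rewrite inE => /andP[_ b_rank].
have : topk A k :\ b \subset [set t' in A | p t' b].
  apply/subsetP => t; rewrite !inE => /andP[tb /andP[tA t_rank]].
  by rewrite tA b_min // inE tA.
move/subset_leq_card => le_card.
have : #|topk A k| <= k by rewrite (cardsD1 b) bK add1n; exact: leq_ltn_trans le_card b_rank.
by rewrite leqNgt k_lt.
Qed.

Lemma card_topk_ge A k : k <= #|A| -> k <= #|topk A k|.
Proof.
move=> kA; rewrite leqNgt; apply/negP => K_lt.
have KA : topk A k \subset A by apply/subsetP => t; rewrite inE => /andP[].
have D_neq0 : A :\: topk A k != set0.
  by rewrite -card_gt0 cardsD (setIidPr KA) subn_gt0; exact: leq_trans K_lt kA.
have [b /setDP[bA bK] b_max] := strict_total_top p_st D_neq0.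
have : [set t' in A | p t' b] \subset topk A k.
  apply/subsetP => t; rewrite inE => /andP[tA tb]; apply/negPn/negP => tK.
  have bt : p b t.
    apply: b_max; first by rewrite inE tK.
    by apply: contraTneq tb => ->; have [-> _ _] := p_st.
  by move: tb; rewrite (negbTE (strict_total_asym p_st bt)).
move/subset_leq_card/leq_ltn_trans/(_ K_lt) => b_rank.
by move: bK; rewrite inE bA b_rank.
Qed.

Lemma topk_upclosed A B k : B \subset A ->
  (forall t t', t \in B -> t' \in A -> p t' t -> t' \in B) -> topk B k \subset topk A k.
Proof.
move=> BA B_up; apply/subsetP => t; rewrite !inE => /andP[tB t_rank].
rewrite (subsetP BA _ tB); apply: leq_ltn_trans t_rank; apply: subset_leq_card.
by apply/subsetP => t'; rewrite !inE => /andP[t'A t't]; rewrite (B_up t) ?t't.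
Qed.

End StrictTotal.

Section RejectionChain.
Variables (T : finType) (f : {set T} -> option T).

(* the rejection sets a student can go through when proposing according to [f] *)
Fixpoint rej_chain k : {set T} :=
  if k is k'.+1 then
    if f (rej_chain k') is Some c then c |: rej_chain k' else rej_chain k'
  else set0.

Lemma rej_chain_sub j k : j <= k -> rej_chain j \subset rej_chain k.
Proof.
move=> /subnK <-; elim: (k - j) => [|n IH] //=.
by case: (f _) => [c|] //; apply: subset_trans IH (subsetUr _ _).
Qed.

Lemma rej_chain_next k c : f (rej_chain k) = Some c -> c \in rej_chain k.+1.
Proof. by move=> /= ->; rewrite setU11. Qed.

Lemma rej_chain_le j k c : f (rej_chain k) = Some c -> c \notin rej_chain j -> j <= k.
Proof.
move=> fk; apply: contraR; rewrite -ltnNge => kj.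
exact: subsetP (rej_chain_sub kj) _ (rej_chain_next fk).
Qed.

End RejectionChain.

Section DeferredAcceptance.
Variables (N M : finType) (pref : M -> rel N) (cap : M -> nat).
Hypothesis pref_st : forall c, strict_total (pref c).
Variable nxt : N -> {set M} -> option M.
Implicit Types (st : da_state N M) (u t : N) (c : M).

Local Notation step := (da_step nxt pref cap).
Local Notation run k := (iter k step (da_init N M)).

Definition da_target st u :=
  if (st.2 u == None) && (st.1 u != [set: M]) then nxt u (st.1 u) else st.2 u.

Definition da_kept st u :=
  if da_target st u is Some c then
    #|[pred t | (da_target st t == Some c) && pref c t u]| < cap c
  else false.

Lemma da_step_rej st u : (step st).1 u =
  if da_target st u is Some c then (if da_kept st u then st.1 u else c |: st.1 u)
  else st.1 u.
Proof. by []. Qed.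

Lemma da_step_held st u : (step st).2 u = if da_kept st u then da_target st u else None.
Proof. by []. Qed.

Lemma da_target_held st u c : st.2 u = Some c -> da_target st u = Some c.
Proof. by rewrite /da_target => ->. Qed.

Definition holds_next st := forall u c, st.2 u = Some c -> nxt u (st.1 u) = Some c.
Definition load_le_cap st := forall c, #|[set u | st.2 u == Some c]| <= cap c.
Definition rejecters_full st := forall u c, c \in st.1 u ->
  cap c <= #|[set t | (st.2 t == Some c) && pref c t u]|.
Definition rej_on_chain st := forall u, exists k, st.1 u = rej_chain (nxt u) k.

Definition da_inv st :=
  [/\ holds_next st, load_le_cap st, rejecters_full st & rej_on_chain st].

Lemma da_target_next st u c : holds_next st -> da_target st u = Some c ->
  nxt u (st.1 u) = Some c.
Proof. by move=> hold; rewrite /da_target; case: ifP => // _; exact: hold. Qed.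

Lemma da_kept_topk st u c : da_target st u = Some c ->
  da_kept st u = (u \in topk (pref c) [set t | da_target st t == Some c] (cap c)).
Proof.
move=> tu; rewrite /da_kept tu !inE tu eqxx /=; congr (_ < _).
by apply: eq_card => t; rewrite !inE.
Qed.

Lemma holds_next_step st : holds_next st -> holds_next (step st).
Proof.
move=> hold u c; rewrite da_step_held; case: ifP => // ku tu.
by rewrite da_step_rej tu ku; exact: da_target_next tu.
Qed.

Lemma load_le_cap_step st : load_le_cap (step st).
Proof.
move=> c; pose A := [set t | da_target st t == Some c].
apply: leq_trans (card_topk_le (pref_st c) A (cap c)).
apply: subset_leq_card; apply/subsetP => u; rewrite [u \in [set _ | _]]inE da_step_held.
by case: ifP => // ku /eqP tu; rewrite -(da_kept_topk tu).
Qed.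

Lemma rejecters_full_step st : rejecters_full st -> rejecters_full (step st).
Proof.
move=> full u c c_rej; set A := [set t | da_target st t == Some c].
set B := [set t in A | pref c t u].
have capB : cap c <= #|B|.
  have old : c \in st.1 u -> cap c <= #|B|.
    move=> /full; move/leq_trans; apply; apply: subset_leq_card; apply/subsetP => t.
    by rewrite !inE => /andP[/eqP/da_target_held -> ->]; rewrite eqxx.
  move: c_rej; rewrite da_step_rej; case tu: (da_target st u) => [d|]; last exact: old.
  case: ifP => [_ /old //|/negbT]; rewrite /da_kept tu -leqNgt => d_full.
  case/setU1P => [cd|/old //]; move: d_full; rewrite -cd => /leq_trans; apply.
  by apply: subset_leq_card; apply/subsetP => t; rewrite !inE.
apply: leq_trans (card_topk_ge (pref_st c) capB) _; apply: subset_leq_card.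
have BA : B \subset A by apply/subsetP => t; rewrite inE => /andP[].
have B_up t t' : t \in B -> t' \in A -> pref c t' t -> t' \in B.
  rewrite !inE => /andP[_ tu] -> /= t't; have [_ tr _] := pref_st c; exact: tr t't tu.
apply/subsetP => t tK; have /setIdP[/setIdP[tA tu] _] := tK.
have tc : da_target st t = Some c by move: tA; rewrite inE => /eqP.
have tKA := subsetP (topk_upclosed (cap c) BA B_up) _ tK.
by rewrite inE da_step_held (da_kept_topk tc) tKA tc eqxx tu.
Qed.

Lemma rej_on_chain_step st : holds_next st -> rej_on_chain st -> rej_on_chain (step st).
Proof.
move=> hold chain u; have [k Ek] := chain u; rewrite da_step_rej.
case tu: (da_target st u) => [d|]; last by exists k.
case: ifP => _; first by exists k.
by exists k.+1; rewrite /= -Ek (da_target_next hold tu).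
Qed.

Lemma da_inv_run k : da_inv (run k).
Proof.
elim: k => [|k [hold load full chain]] /=.
  split=> // [c | u c | u]; last by exists 0.
    by rewrite (_ : [set u | _] = set0) ?cards0 //; apply/setP => u; rewrite !inE.
  by rewrite inE.
split; [exact: holds_next_step | exact: load_le_cap_step |
        exact: rejecters_full_step | exact: rej_on_chain_step].
Qed.

Lemma da_inv_held_pref st u t c : da_inv st -> c \in st.1 u -> st.2 t = Some c ->
  pref c t u.
Proof.
case=> _ load full _ /full c_full tc.
have sub : [set t | (st.2 t == Some c) && pref c t u] \subset [set u | st.2 u == Some c].
  by apply/subsetP => x; rewrite !inE => /andP[].
have : [set t | (st.2 t == Some c) && pref c t u] == [set u | st.2 u == Some c].
  by rewrite eqEcard sub /=; apply: leq_trans (load c) c_full.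
by move/eqP/setP/(_ t); rewrite !inE tc eqxx /= => ->.
Qed.

Lemma da_step_rej_sub st u : st.1 u \subset (step st).1 u.
Proof.
by rewrite da_step_rej; case: (da_target st u) => [d|] //; case: ifP => // _; exact: subsetUr.
Qed.

Lemma da_run_rej_sub j k u : j <= k -> (run j).1 u \subset (run k).1 u.
Proof.
move=> /subnK <-; elim: (k - j) => [|n IH] //.
exact: subset_trans IH (da_step_rej_sub _ _).
Qed.

Lemma da_step_new_rej st u c : c \notin st.1 u -> c \in (step st).1 u ->
  (step st).2 u = None.
Proof.
move=> /negbTE c_old; rewrite da_step_rej da_step_held.
by case: (da_target st u) => [d|]; rewrite ?c_old //; case: ifP; rewrite ?c_old.
Qed.

Lemma da_step_dropped st u c : st.2 u = Some c -> (step st).2 u = None ->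
  c \in (step st).1 u.
Proof.
move=> uc; rewrite da_step_rej da_step_held (da_target_held uc).
by case: ifP => // _ _; exact: setU11.
Qed.

Lemma da_step_kept st u c : st.2 u = Some c -> (step st).2 u != None ->
  (step st).2 u = Some c.
Proof. by move=> uc; rewrite da_step_held (da_target_held uc); case: ifP. Qed.

Lemma da_terminal_unmatched st u : da_terminal st -> st.2 u = None -> st.1 u = [set: M].
Proof.
by move=> /forallP/(_ u)/orP[/negP matched | /eqP //] unmatched; rewrite unmatched in matched.
Qed.

Lemma da_run_hold_persists j k u c : j <= k -> (run j).2 u = Some c ->
  (forall i, j < i <= k -> (run i).2 u != None) -> (run k).2 u = Some c.
Proof.
elim: k => [|k IH]; first by rewrite leqn0 => /eqP ->.
rewrite leq_eqVlt => /predU1P[<- //|jk] uc matched.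
have matched_k i : j < i <= k -> (run i).2 u != None.
  by move=> /andP[ji ik]; apply: matched; rewrite ji leqW.
by apply: da_step_kept (IH jk uc matched_k) (matched k.+1 _); rewrite jk leqnn.
Qed.

Lemma da_step_displaces st t t' c : da_inv st -> c \in st.1 t' ->
  st.2 t = None -> (step st).2 t = Some c ->
  exists u, [/\ (step st).2 u = None, c \in (step st).1 u & pref c u t'].
Proof.
move=> inv c_rej tN tc; have [_ _ full _] := inv.
set H := [set u | st.2 u == Some c]; set H' := [set u | (step st).2 u == Some c].
have capH : cap c <= #|H|.
  apply: leq_trans (full _ _ c_rej) _; apply: subset_leq_card.
  by apply/subsetP => x; rewrite !inE => /andP[].
have tH : t \notin H by rewrite inE tN.
have : ~~ (t |: H \subset H').
  apply/negP => /subset_leq_card; rewrite cardsU1 tH add1n => /leq_trans.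
  by move=> /(_ _ (load_le_cap_step st c))/leq_trans/(_ capH); rewrite ltnn.
case/subsetPn => u; case/setU1P => [->|uH]; first by rewrite inE tc eqxx.
rewrite inE => uH'; have uc : st.2 u = Some c by move: uH; rewrite inE => /eqP.
have uN : (step st).2 u = None.
  by apply/eqP; apply: contraNT uH' => /(da_step_kept uc) ->.
by exists u; split; [| exact: da_step_dropped uc uN | exact: da_inv_held_pref inv c_rej uc].
Qed.

End DeferredAcceptance.

Section Misreport.
Variables (N M : finType) (pref : M -> rel N) (cap : M -> nat).
Hypothesis pref_st : forall c, strict_total (pref c).
Variables (nxt1 nxt2 : N -> {set M} -> option M) (k1 k2 : nat).

Local Notation run1 j := (iter j (da_step nxt1 pref cap) (da_init N M)).
Local Notation S1 := (run1 k1).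
Local Notation S2 := (iter k2 (da_step nxt2 pref cap) (da_init N M)).

Hypothesis S2_final : da_terminal S2.

Definition gainers := [set t | if S2.2 t is Some c then c \in S1.1 t else false].

Hypothesis same_next : forall u, u \notin gainers -> nxt1 u = nxt2 u.

Let inv1 j : da_inv pref cap nxt1 (run1 j) := da_inv_run cap pref_st nxt1 j.
Let inv2 : da_inv pref cap nxt2 S2 := da_inv_run cap pref_st nxt2 k2.

Lemma gainerP t : reflect (exists2 c, S2.2 t = Some c & c \in S1.1 t) (t \in gainers).
Proof.
rewrite inE; case: (S2.2 t) => [c|]; last by constructor; case.
by apply: (iffP idP) => [|[_ [->]]] //; exists c.
Qed.

Lemma nongainer_chains u d : u \notin gainers -> S2.2 u = Some d ->
  exists j k, [/\ S1.1 u = rej_chain (nxt1 u) j, S2.1 u = rej_chain (nxt1 u) k,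
                  nxt1 u (rej_chain (nxt1 u) k) = Some d & j <= k].
Proof.
move=> uG ud; have [_ _ _ chain1] := inv1 k1; have [hold2 _ _ chain2] := inv2.
have [j Ej] := chain1 u; have [k Ek] := chain2 u; rewrite -(same_next uG) in Ek.
have nk : nxt1 u (rej_chain (nxt1 u) k) = Some d by rewrite -Ek (same_next uG); exact: hold2.
exists j, k; split => //; apply: rej_chain_le nk _; rewrite -Ej.
by apply: contra uG => d_rej; apply/gainerP; exists d.
Qed.

Lemma nongainer_rej_sub u : u \notin gainers -> S1.1 u \subset S2.1 u.
Proof.
move=> uG; case ud: (S2.2 u) => [d|].
  by have [j [k [-> -> _ /rej_chain_sub]]] := nongainer_chains uG ud.
by rewrite (da_terminal_unmatched S2_final ud) subsetT.
Qed.

Lemma nongainer_lost_rej u c : u \notin gainers -> S1.2 u = Some c -> S2.2 u != Some c ->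
  c \in S2.1 u.
Proof.
move=> uG uc; case ud: (S2.2 u) => [d|] dc; last first.
  by rewrite (da_terminal_unmatched S2_final ud) inE.
have [j [k [Ej -> nk jk]]] := nongainer_chains uG ud.
have [hold1 _ _ _] := inv1 k1; have nj := hold1 _ _ uc; rewrite Ej in nj.
have jk_lt : j < k.
  by rewrite ltn_neqAle jk andbT; apply/eqP => jk_eq; move: dc; rewrite -nk -jk_eq nj eqxx.
exact: subsetP (rej_chain_sub _ jk_lt) _ (rej_chain_next nj).
Qed.

Lemma gainer_fiber_le t c : t \in gainers -> S2.2 t = Some c ->
  #|[set x in gainers | S2.2 x == Some c]| <= #|[set x in gainers | S1.2 x == Some c]|.
Proof.
move=> /gainerP[c' tc' c_rej] tc.
have c'c : c' = c by move: tc; rewrite tc' => -[].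
rewrite {c' tc'}c'c in c_rej.
have [_ load1 full1 _] := inv1 k1; have [_ load2 _ _] := inv2.
set H1 := [set x | S1.2 x == Some c]; set H2 := [set x | S2.2 x == Some c].
have H1_full : #|H1| = cap c.
  apply/eqP; rewrite eqn_leq load1 /=; apply: leq_trans (full1 _ _ c_rej) _.
  by apply: subset_leq_card; apply/subsetP => x; rewrite !inE => /andP[].
have H12 : H1 :\: H2 \subset [set x in gainers | S1.2 x == Some c].
  apply/subsetP => x /setDP[]; rewrite [x \in H1]inE [x \in H2]inE => x1 x2.
  apply/setIdP; split => //.
  apply/negPn/negP => xG; have c_rej2 := nongainer_lost_rej xG (eqP x1) x2.
  have := da_inv_held_pref inv2 c_rej2 tc.
  by apply/negP/strict_total_asym => //; exact: da_inv_held_pref (inv1 k1) c_rej (eqP x1).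
have H21 : [set x in gainers | S2.2 x == Some c] \subset H2 :\: H1.
  apply/subsetP => x /setIdP[/gainerP[d xd d_rej]]; rewrite xd => /eqP[dc].
  subst d; rewrite !inE xd eqxx andbT; apply/eqP => xc.
  by have [irr _ _] := pref_st c; have := da_inv_held_pref (inv1 k1) d_rej xc; rewrite irr.
apply: leq_trans (subset_leq_card H21) (leq_trans _ (subset_leq_card H12)).
by rewrite !cardsD [H2 :&: H1]setIC H1_full leq_sub2r ?load2.
Qed.

Lemma gainer_matched t : t \in gainers ->
  exists c t', [/\ S1.2 t = Some c, t' \in gainers & S2.2 t' = Some c].
Proof.
move=> tG; have fibers a : a \in gainers -> #|[set x in gainers | S2.2 x == S2.2 a]| <=
    #|[set x in gainers | S1.2 x == S2.2 a]|.
  by move=> aG; have /gainerP[c ac _] := aG; rewrite ac; exact: (gainer_fiber_le aG ac).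
have /imsetP[t' t'G tt'] := fibers_le_image fibers tG.
by have /gainerP[c t'c _] := t'G; exists c, t'; rewrite tt' t'c.
Qed.

Lemma gainers_last_unmatched t0 : t0 \in gainers -> exists r t,
  [/\ r < k1, t \in gainers, (run1 r).2 t = None &
      forall i u, r < i <= k1 -> u \in gainers -> (run1 i).2 u != None].
Proof.
move=> t0G; have matched u : u \in gainers -> S1.2 u != None.
  by case/gainer_matched => c [t' [-> _ _]].
pose Q j := (j < k1) && [exists t in gainers, (run1 j).2 t == None].
have Q0 : Q 0.
  rewrite /Q lt0n; apply/andP; split; last by apply/existsP; exists t0; rewrite t0G.
  by apply: contra (matched _ t0G) => /eqP ->.
have Q_le j : Q j -> j <= k1 by case/andP => /ltnW.
have [r /andP[rk /existsP[t /andP[tG /eqP tN]]] r_max] := ex_maxnP (ex_intro _ 0 Q0) Q_le.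
exists r, t; split => // i u /andP[ri ik] uG.
have [ik_lt|ki] := ltnP i k1; last first.
  have -> : i = k1 by apply/eqP; rewrite eqn_leq ik ki.
  exact: matched.
apply/negP => /eqP uN; have : Q i by rewrite /Q ik_lt; apply/existsP; exists u; rewrite uG uN.
by move/r_max; rewrite leqNgt ri.
Qed.

(* In the last round [r] in which a gainer [t] is unmatched, [t] proposes to the college [c]
   it keeps up to the end; [c] has already rejected another gainer, so it is full and must
   drop a student [u] it prefers to that gainer, and [u] then contradicts the second run. *)
Lemma gainers_eq0 : gainers = set0.
Proof.
apply/eqP/set0Pn => -[t0 /gainers_last_unmatched[r [t [rk tG tN later]]]].
have [c [t' [tc t'G t'c]]] := gainer_matched tG.
have rk1 : r < r.+1 <= k1 by rewrite ltnSn rk.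
have tc1 : (run1 r.+1).2 t = Some c.
  have := later _ _ rk1 tG; case tc1: ((run1 r.+1).2 t) => [c1|] // _.
  have later_t i : r.+1 < i <= k1 -> (run1 i).2 t != None.
    by case/andP => /ltnW ri ik; apply: later; rewrite ?ri.
  by have := da_run_hold_persists rk tc1 later_t; rewrite tc => -[->].
have c_rej_t' : c \in (run1 r).1 t'.
  have c_rej1 : c \in S1.1 t' by move: t'G => /gainerP[c']; rewrite t'c => -[<-].
  have c_rej0 : c \notin (run1 0).1 t' by rewrite inE.
  have [j [jk cj cj1]] := exists_first_step (P := fun j => c \in (run1 j).1 t') c_rej0 c_rej1.
  have t'N := da_step_new_rej cj cj1.
  apply: subsetP (da_run_rej_sub pref cap nxt1 t' _) _ cj1; rewrite leqNgt.
  by apply/negP => rj; have := later j.+1 t'; rewrite rj jk t'N => /(_ isT t'G).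
have [u [uN c_rej_u u_t']] := da_step_displaces pref_st (inv1 r) c_rej_t' tN tc1.
have uG : u \notin gainers by apply/negP => /(later _ _ rk1); rewrite uN.
have c_rej2 : c \in S2.1 u.
  apply: subsetP (nongainer_rej_sub uG) _ _.
  exact: subsetP (da_run_rej_sub pref cap nxt1 u rk) _ c_rej_u.
by have := da_inv_held_pref inv2 c_rej2 t'c; apply/negP/strict_total_asym.
Qed.

End Misreport.

Theorem da_misreport_not_rejected (N M : finType) (pref : M -> rel N) (cap : M -> nat)
    (nxt1 nxt2 : N -> {set M} -> option M) (s : N) k1 k2 c :
  (forall c, strict_total (pref c)) -> (forall u, u != s -> nxt1 u = nxt2 u) ->
  da_terminal (iter k2 (da_step nxt2 pref cap) (da_init N M)) ->
  (iter k2 (da_step nxt2 pref cap) (da_init N M)).2 s = Some c ->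
  c \notin (iter k1 (da_step nxt1 pref cap) (da_init N M)).1 s.
Proof.
move=> pref_st same_next S2_final sc; apply/negP => c_rej.
have sG : s \in gainers pref cap nxt1 nxt2 k1 k2 by rewrite inE sc.
have same u : u \notin gainers pref cap nxt1 nxt2 k1 k2 -> nxt1 u = nxt2 u.
  by move=> uG; apply: same_next; apply: contraNneq uG => ->.
by rewrite (gainers_eq0 pref_st S2_final same) inE in sG.
Qed.

From mathcomp Require Import all_algebra all_classical all_reals all_analysis.
From mathcomp Require Import measurable_realfun ring lra.
Import Order.TTheory GRing.Theory Num.Theory.
Local Open Scope ring_scope.

Lemma lexi_sorted_ge d (T : orderType d) (a : T) (s t : seq T) :
  sorted <=%O s -> size t = size s -> (t <= s :> seqlexi T)%O ->
  all (>= a)%O t -> all (>= a)%O s.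
Proof.
case: s t => [|x s] [|y t] //= s_sorted _ /lexi_lehead yx /andP[ay _].
have ax := le_trans ay yx; rewrite ax /=; apply/allP => z zs.
by apply: le_trans ax _; move/allP: (order_path_min le_trans s_sorted); apply.
Qed.

Lemma lex_leE (R : realType) (s t : seq R) : lex_le s t = (s <= t :> seqlexi R)%O.
Proof.
elim: s t => [|x s IH] [|y t] //=; rewrite lexi_cons IH.
by case: ltgtP.
Qed.

Section Loicv.
Variables (R : realType) (M : finType) (r : report R M) (Rs : {set M}).

Lemma size_loicv_vec c : c \in ~: Rs -> size (loicv_vec r Rs c) = (#|~: Rs| - 1)%N.
Proof.
move=> cA; rewrite /loicv_vec size_sort size_map size_filter cardE.
have := count_predC (pred1 c) (enum (~: Rs)).
rewrite (count_uniq_mem c (enum_uniq (mem (~: Rs)))) mem_enum cA /= => <-.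
by rewrite add1n subSS subn0; apply: eq_count.
Qed.

Lemma loicv_best_neq0 : ~: Rs != finset.set0 -> loicv_best r Rs != finset.set0.
Proof.
case/finset.set0Pn => c0 c0A.
have [b bA b_max] := @arg_maxP _ (seqlexi R) M c0 (mem (~: Rs)) (loicv_vec r Rs) c0A.
apply/finset.set0Pn; exists b; rewrite inE; apply/andP; split; first exact: bA.
by apply/forallP => c; apply/implyP => cA; rewrite lex_leE; exact: b_max.
Qed.

Lemma loicv_best_ge_half c cw :
  c \in loicv_best r Rs -> cw \in ~: Rs ->
  (forall x, x \in ~: Rs -> 2^-1 <= prob_weak r cw x) ->
  forall c', c' \in ~: Rs -> c' != c -> 2^-1 <= prob_weak r c c'.
Proof.
rewrite inE => /andP[cA /forallP c_best] cwA cw_half c' c'A c'c.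
have : all (fun x => 2^-1 <= x) (loicv_vec r Rs c).
  apply: (lexi_sorted_ge (t := loicv_vec r Rs cw)).
  - by apply: sort_sorted; exact: le_total.
  - by rewrite !size_loicv_vec.
  - by rewrite -lex_leE; exact: implyP (c_best cw) cwA.
  apply/allP => y; rewrite mem_sort => /mapP[x]; rewrite mem_filter mem_enum.
  by move=> /andP[_ xA] ->; exact: cw_half.
move/allP; apply; rewrite mem_sort; apply/mapP; exists c' => //.
by rewrite mem_filter c'c mem_enum.
Qed.

End Loicv.

Section Probability.
Local Open Scope classical_set_scope.
Context d (T : measurableType d) (R : realType) (P : probability T R).

Definition pr (A : set T) : R := fine (P A).

Lemma pr_lty A : measurable A -> (P A < +oo)%E.
Proof. by move=> mA; apply: le_lt_trans (probability_le1 P mA) _; rewrite ltry. Qed.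

Lemma prE A : measurable A -> P A = (pr A)%:E.
Proof. by move=> mA; rewrite /pr fineK // ge0_fin_numE ?measure_ge0 ?pr_lty. Qed.

Lemma pr_le A B : measurable A -> measurable B -> A `<=` B -> pr A <= pr B.
Proof.
by move=> mA mB AB; rewrite -lee_fin -!prE //; apply: le_measure => //; rewrite inE.
Qed.

Lemma pr_setC A : measurable A -> pr (~` A) = 1 - pr A.
Proof.
move=> mA; have := probability_setC P mA; rewrite prE ?prE //; last exact: measurableC.
by move=> [].
Qed.

Lemma pr_setU A B : measurable A -> measurable B -> pr (A `|` B) <= pr A + pr B.
Proof.
move=> mA mB; rewrite -lee_fin EFinD -!prE //; last exact: measurableU.
exact: measureU2.
Qed.

Lemma pr_le_on S A B : pr S = 1 -> measurable S -> measurable A -> measurable B ->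
  A `&` S `<=` B -> pr A <= pr B.
Proof.
move=> S1 mS mA mB ASB; have mC := measurableC mS.
have : pr A <= pr (B `|` ~` S).
  apply: pr_le => //; first exact: measurableU.
  by move=> w Aw; case: (pselect (S w)) => Sw; [left; exact: ASB | right].
by move/le_trans/(_ (pr_setU mB mC)); rewrite pr_setC // S1; lra.
Qed.

Lemma measurable_ler (f g : T -> R) : measurable_fun setT f -> measurable_fun setT g ->
  measurable [set x | f x <= g x].
Proof.
by move=> mf mg; rewrite -[X in measurable X]setTI; exact: measurable_fun_ler.
Qed.

(* continuity of [P] from above: the sets [f <= g + 1/(n+1)] decrease to [f <= g] *)
Lemma pr_le_approx (f g : T -> R) (a : R) : measurable_fun setT f -> measurable_fun setT g ->
  (forall n : nat, a <= pr [set x | f x <= g x + n.+1%:R^-1]) -> a <= pr [set x | f x <= g x].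
Proof.
move=> mf mg ha; pose F n := [set x | f x <= g x + n.+1%:R^-1].
have mF n : measurable (F n).
  by apply: measurable_ler => //; apply: measurable_funD => //; exact: measurable_cst.
have mFg : measurable [set x | f x <= g x] by exact: measurable_ler.
have capF : \bigcap_n F n = [set x | f x <= g x].
  apply/seteqP; split => x /=; last first.
    by move=> fg n _; apply: le_trans fg _; rewrite /F /= lerDl.
  move=> Fx; rewrite leNgt; apply/negP => /ltr_add_invr[k].
  by rewrite ltNge (Fx k I).
have decF : nonincreasing_seq F.
  move=> m n mn; apply/subsetPset => x; rewrite /F /= => /le_trans; apply.
  by rewrite lerD2l lef_pV2 ?posrE // ler_nat.
have := nonincreasing_cvg_mu (pr_lty (mF 0%N)) mF _ decF.
rewrite capF => /(_ mFg) cvgF; rewrite -lee_fin -prE //.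
apply: (cvge_to_ge cvgF); apply: nearW => n.
by have := ha n; rewrite -lee_fin -(prE (mF n)).
Qed.

End Probability.

Section TwoFeatures.
Local Open Scope classical_set_scope.
Context (R : realType) (P : probability (R * R)%type R).

Definition simplex : set (R * R) := [set w | 0 <= w.1 /\ 0 <= w.2 /\ w.1 + w.2 = 1].

Hypothesis P_simplex : pr P simplex = 1.

Lemma measurable_wutil (M : finType) (u1 u2 : M -> R) c :
  measurable_fun setT (fun w : R * R => wutil u1 u2 w c).
Proof.
by apply: measurable_funD; apply: measurable_funM;
  first [exact: measurable_fst | exact: measurable_snd | exact: measurable_cst].
Qed.

Lemma measurable_simplex : measurable simplex.
Proof.
have mS := @measurable_snd _ _ R R; have mF := @measurable_fst _ _ R R.
have mD : measurable_fun setT (fun w : R * R => w.1 + w.2) by exact: measurable_funD.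
have -> : simplex = [set w | 0 <= w.1] `&` [set w | 0 <= w.2] `&`
    ([set w | w.1 + w.2 <= 1] `&` [set w | 1 <= w.1 + w.2]).
  apply/seteqP; split => w /=; first by move=> [h1 [h2 ->]]; rewrite !lexx.
  by move=> [[h1 h2] [h3 h4]]; do 2!split => //; apply/eqP; rewrite eq_le h3 h4.
by do !apply: measurableI; apply: measurable_ler.
Qed.

Lemma measurable_fst_le x : measurable [set w : R * R | w.1 <= x].
Proof. by apply: measurable_ler; [exact: measurable_fst | exact: measurable_cst]. Qed.

Lemma pr_le_simplex A B : measurable A -> measurable B ->
  A `&` simplex `<=` B -> pr P A <= pr P B.
Proof. exact: pr_le_on P_simplex measurable_simplex. Qed.

Lemma median_exists : exists m : R,
  2^-1 <= pr P [set w | w.1 <= m] /\ 2^-1 <= pr P [set w | m <= w.1].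
Proof.
pose F x := pr P [set w : R * R | w.1 <= x].
pose E := [set x | 2^-1 <= F x].
have E1 : E 1.
  have : pr P simplex <= F 1.
    apply: pr_le_simplex; [exact: measurable_simplex | exact: measurable_fst_le |].
    by move=> w [_ [h1 [h2 h3]]] /=; lra.
  by rewrite /E /= P_simplex; lra.
have E_ge0 : lbound E 0.
  move=> x Ex; rewrite leNgt; apply/negP => x_lt0.
  have : F x <= pr P set0.
    apply: pr_le_simplex => //; first exact: measurable_fst_le.
    by move=> w [/= wx [h1 _]]; lra.
  by rewrite /pr measure0 /=; move: Ex; rewrite /E /=; lra.
have E_inf : has_inf E by split; [exists 1 | exists 0].
exists (inf E); split.
- apply: pr_le_approx; [exact: measurable_fst | exact: measurable_cst |] => n.
  have e_gt0 : 0 < n.+1%:R^-1 :> R by rewrite invr_gt0 ltr0n.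
  have [x Ex x_lt] := inf_adherent e_gt0 E_inf.
  apply: le_trans Ex _; apply: pr_le; [exact: measurable_fst_le | exact: measurable_fst_le |].
  by move=> w /= /le_trans; apply; apply: ltW.
- apply: pr_le_approx; [exact: measurable_cst | exact: measurable_fst |] => n.
  set y := inf E - n.+1%:R^-1.
  have Fy : F y < 2^-1.
    rewrite ltNge; apply/negP => Ey; have := ge_inf E_inf.2 Ey.
    by rewrite /y lerBrDr gerDl invr_le0 lern0.
  have : 1 - F y <= pr P [set w | inf E <= w.1 + n.+1%:R^-1].
    rewrite -pr_setC; last exact: measurable_fst_le.
    apply: pr_le; [exact: measurableC (measurable_fst_le _) | |].
      by apply: measurable_ler; [exact: measurable_cst | apply: measurable_funD;
        [exact: measurable_fst | exact: measurable_cst]].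
    by move=> w /= /negP; rewrite -ltNge /y ltrBlDr => /ltW.
  lra.
Qed.

(* Along the simplex, a utility difference is affine in [w.1]; the college best at the
   median weight therefore wins on one of the two half-lines at the median. *)
Lemma weak_condorcet_winner (M : finType) (u1 u2 : M -> R) (A : {set M}) :
  A != finset.set0 -> exists2 cw, cw \in A & forall c, c \in A ->
    2^-1 <= pr P [set w | wutil u1 u2 w c <= wutil u1 u2 w cw].
Proof.
move=> /finset.set0Pn[c0 c0A]; have [m [lo hi]] := median_exists.
pose g c := wutil u1 u2 (m, 1 - m) c.
have [cw cwA g_max] := @arg_maxP _ _ M c0 (mem A) g c0A.
exists cw => // c cA.
set h := g cw - g c; set b := (u1 cw - u2 cw) - (u1 c - u2 c).
have h_ge0 : 0 <= h by rewrite subr_ge0; exact: g_max.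
have diffE w : simplex w -> wutil u1 u2 w cw - wutil u1 u2 w c = h + b * (w.1 - m).
  move=> [_ [_ w_sum]]; rewrite /h /b /g /wutil /= (_ : w.2 = 1 - w.1); last lra.
  ring.
have mB := measurable_ler (measurable_wutil u1 u2 c) (measurable_wutil u1 u2 cw).
have [b_ge0|b_lt0] := lerP 0 b.
- apply: le_trans hi (pr_le_simplex _ mB _).
    by apply: measurable_ler; [exact: measurable_cst | exact: measurable_fst].
  move=> w [/= mw Sw]; rewrite -subr_ge0 diffE //.
  by apply: addr_ge0 h_ge0 (mulr_ge0 b_ge0 _); rewrite subr_ge0.
- apply: le_trans lo (pr_le_simplex (measurable_fst_le _) mB _).
  move=> w [/= wm Sw]; rewrite -subr_ge0 diffE //.
  by apply: addr_ge0 h_ge0 (mulr_le0 (ltW b_lt0) _); rewrite subr_le0.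
Qed.

End TwoFeatures.
Arguments simplex {R}.

Section LoicvStep.
Local Open Scope classical_set_scope.
Variables (R : realType) (N M : finType).

Lemma half_not_lt_measure_set0 (P : probability (R * R)%type R) A :
  A = set0 -> ~ ((2^-1)%:E < P A)%E.
Proof. by move=> ->; rewrite measure0 lte_fin; apply/negP; rewrite -leNgt invr_ge0 ler0n. Qed.

Lemma loicv_next_best (tb : N -> {set M} -> option M) (rep : N -> report R M) s Rs c :
  tie_rule tb -> ~: Rs != finset.set0 -> loicv_next tb rep s Rs = Some c ->
  c \in loicv_best (rep s) Rs.
Proof.
move=> tie /(loicv_best_neq0 (rep s)) best_neq0; rewrite /loicv_next.
by have [c' -> c'_best] := tie s _ best_neq0 => -[<-].
Qed.

Lemma loicv_best_not_beaten (r : report R M) Rs c c' : valid_report r ->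
  c \in loicv_best r Rs -> c' \in ~: Rs ->
  ~ ((2^-1)%:E < wdist r [set w | spref (util1 r) (util2 r) w (Some c') (Some c)])%E.
Proof.
move=> [_ r_simplex] c_best c'A.
have [<-|c'c] := eqVneq c' c.
  by apply: half_not_lt_measure_set0; apply/seteqP; split => w /=; rewrite ltxx.
have P_simplex : pr (wdist r) simplex = 1 by rewrite /pr r_simplex.
have A_neq0 : ~: Rs != finset.set0 by apply/finset.set0Pn; exists c'.
have [cw cwA cw_half] := weak_condorcet_winner P_simplex (util1 r) (util2 r) A_neq0.
have half := loicv_best_ge_half c_best cwA cw_half c'A c'c.
set B := [set w | wutil (util1 r) (util2 r) w c' <= wutil (util1 r) (util2 r) w c].
have mB : measurable B by apply: measurable_ler; exact: measurable_wutil.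
have -> : [set w | spref (util1 r) (util2 r) w (Some c') (Some c)] = ~` B.
  by apply/seteqP; split => w /=; rewrite ltNge => /negP.
rewrite (prE _ (measurableC mB)) pr_setC // lte_fin; move: half; rewrite /prob_weak -/(pr _ B).
lra.
Qed.

End LoicvStep.

Theorem theorem7 (R : realType) (N M : finType)
  (cap : M -> nat) (pref : M -> rel N)
  (tb : N -> {set M} -> option M)
  (rep : N -> report R M) (s : N) (r' : report R M)
  (pi pi' : N -> option M) :
  (forall c, (0 < cap c)%N) ->
  (forall c, strict_total (pref c)) ->
  tie_rule tb ->
  (forall t, valid_report (rep t)) ->
  valid_report r' ->
  da_outcome (loicv_next tb rep) pref cap pi ->
  da_outcome (loicv_next tb (upd_report rep s r')) pref cap pi' ->
  ~ (wdist (rep s) [set w | spref (util1 (rep s)) (util2 (rep s)) w (pi' s) (pi s)]%classic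
       > (2^-1)%:E)%E.
Proof.
move=> _ pref_st tie valid _ [k1 [S1_final [_ ->]]] [k2 [S2_final [_ ->]]].
set S1 := iter k1 _ _ in S1_final *; set S2 := iter k2 _ _ in S2_final *.
case s2: (S2.2 s) => [c'|]; last by apply: half_not_lt_measure_set0; apply/seteqP; split => w [].
have c'A : c' \in ~: S1.1 s.
  rewrite inE; apply: (da_misreport_not_rejected k1 pref_st _ S2_final s2) => u us.
  by apply: boolp.funext => Rs; rewrite /loicv_next /upd_report (negbTE us).
case s1: (S1.2 s) => [c|]; last by rewrite (da_terminal_unmatched S1_final s1) !inE in c'A.
apply: (loicv_best_not_beaten (valid s) _ c'A); apply: loicv_next_best tie _ _.
  by apply/finset.set0Pn; exists c'.
by have [hold _ _ _] := da_inv_run cap pref_st (loicv_next tb rep) k1; exact: hold.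
Qed.
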